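(* Let $d\ge2$ and let $N_1,\dots,N_d,s$ be positive integers with $\min_{1\le i\le d}N_i>s\ge2$. Let $X\subseteq[N_1]\times\cdots\times[N_d]$, $\lambda_0\in(0,\frac1{s-1})$, and let $B\subseteq[-\frac{N_1}{s-1},\frac{N_1}{s-1}]\times\cdots\times[-\frac{N_d}{s-1},\frac{N_d}{s-1}]$ be a set of nonzero integer points such that every $(b_1,\dots,b_d)\in B$ satisfies $\lambda_0\le\max_{1\le i\le d}\frac{|b_i|}{\gcd(b_1,\dots,b_d)N_i}$. Let $\mathbf{b}\in B$, let $f_{\mathbf{b}}:\mathbb{Z}^d\to\mathbb{Z}^{d-1}$ be a map of the form $f_{\mathbf{b}}(\mathbf{x})=M\mathbf{x}+\mathbf{v}$ ($M\in\mathbb{Z}^{(d-1)\times d}$, $\mathbf{v}\in\mathbb{Z}^{d-1}$) such that for all $\mathbf{x}_1,\mathbf{x}_2\in\mathbb{Z}^d$, $f_{\mathbf{b}}(\mathbf{x}_1)=f_{\mathbf{b}}(\mathbf{x}_2)$ iff $\mathbf{x}_1-\mathbf{x}_2=k\mathbf{b}$ for some $k\in\mathbb{Q}$, and let $s^*\le s$ be a positive integer. Then \[ \sum_{\mathbf{b}'\in B}|U^d(X,\mathbf{b},s)\cap U^d(X,\mathbf{b}',s)|\le\frac{4}{s\lambda_0}|U^d(X,\mathbf{b},s)|+\frac{s^*-1}{s}\sum_{\mathbf{b}'\in B}|U^d(X,\mathbf{b}',s)|+\frac{12}{s\lambda_0^2}\sum_{\mathbf{b}^*\in\mathbb{Z}^{d-1}\setminus\{\mathbf{0}\}}|U^{d-1}(f_{\mathbf{b}}(U^d(X,\mathbf{b},s)),\mathbf{b}^*,s^*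 )|. \]
   Context: $[N]=\{1,\dots,N\}$. For $n\ge1$, a finite set $Y\subseteq\mathbb{Z}^n$, $\mathbf{c}\in\mathbb{Z}^n\setminus\{\mathbf{0}\}$ and a positive integer $r$: points $\mathbf{y},\mathbf{y}'$ are congruent mod $\mathbf{c}$ if $\mathbf{y}-\mathbf{y}'\in\mathbb{Z}\mathbf{c}$, and $U^n(Y,\mathbf{c},r)$ is the set of $\mathbf{y}\in Y$ with $|\{\mathbf{y}'\in Y:\mathbf{y}'\equiv\mathbf{y}\pmod{\mathbf{c}}\}|\ge r$. *)

From HB Require Import structures.
From mathcomp Require Import all_boot all_order all_algebra.
From mathcomp Require Import finmap.
From mathcomp Require Import all_classical all_reals all_analysis.
Set Implicit Arguments. Unset Strict Implicit. Unset Printing Implicit Defensive.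
Import Order.TTheory GRing.Theory Num.Theory.
Local Open Scope ring_scope.
Local Open Scope fset_scope.

(* Points of Z^n are integer row vectors 'rV[int]_n; coordinate i is x 0 i. *)

Definition congr_mod (n : nat) (c y y' : 'rV[int]_n) : Prop :=
  exists k : int, y - y' = k *: c.

Definition U (n : nat) (Y : {fset 'rV[int]_n}) (c : 'rV[int]_n) (r : nat)
  : {fset 'rV[int]_n} :=
  [fset y in Y | (r <= #|` [fset y' in Y | `[< congr_mod c y' y >]]|)%N].

Definition gcdv (n : nat) (b : 'rV[int]_n) : int :=
  \big[gcdz/0]_(i < n) b 0 i.

(* the affine map x |-> M x + v, written on row vectors as x M^T + v *)
Definition affine_map (d e : nat) (M : 'M[int]_(e, d)) (v : 'rV[int]_e)
  (x : 'rV[int]_d) : 'rV[int]_e := x *m M^T + v.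

Definition fimage (T T' : choiceType) (f : T -> T') (A : {fset T}) : {fset T'} :=
  [fset f x | x in A].

From HB Require Import structures.
From mathcomp Require Import all_boot all_order all_algebra.
From mathcomp Require Import finmap.
From mathcomp Require Import all_classical all_reals all_analysis.
From mathcomp Require Import zify ring lra.
Import Order.TTheory GRing.Theory Num.Theory.
Local Open Scope ring_scope.

(* Fix a coordinate i with lambda0 <= |b_i| / (gcd(b) N_i). If x - y is a
   rational multiple of b for integral x, y, then b_i divides gcd(b) (x_i - y_i),
   so a family of such points whose i-th coordinates range over an interval of
   length L has at most L / (lambda0 N_i) + 1 members. Hence a fibre of f_b in X
   has at most 1/lambda0 + 1 points, and at most 2/((s-1) lambda0) + 1 vectors of
   B u {0} share the same image direction b' M^T.
   The directions b' parallel to b are thus few, and contribute at most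
   4/(s lambda0) |U(X,b,s)|. For any other b', a point of
   U(X,b,s) n U(X,b',s) whose b'-class in U(X,b,s) has at least sstar elements is
   sent by f_b into U(f_b(U(X,b,s)), b' M^T, sstar), at most 1/lambda0 + 1 points
   per image point; the remaining points number at most (sstar-1)/s |U(X,b',s)|,
   by double counting b'-congruent pairs. *)

Lemma uniq_eqmod_size (S : seq nat) (m n : nat) :
  uniq S -> (0 < m)%N -> {in S &, forall x y, x = y %[mod m]} ->
  {in S, forall x, x <= n}%N -> ((size S).-1 * m <= n)%N.
Proof.
move=> uS m_gt0 eqS leS.
have div_inj : {in S &, injective (divn^~ m)}.
  by move=> x y xS yS eq_div; rewrite (divn_eq x m) (divn_eq y m) eq_div (eqS x y).
have : (size S <= (n %/ m).+1)%N.
  rewrite -(size_map (divn^~ m)) -[X in (_ <= X)%N](size_iota 0).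
  apply: uniq_leq_size; first by rewrite map_inj_in_uniq.
  by move=> _ /mapP[x xS ->]; rewrite mem_iota ltnS leq_div2r // leS.
move=> le_size; apply: leq_trans (leq_divM n m).
by rewrite leq_mul2r -subn1 leq_subLR add1n le_size orbT.
Qed.

Lemma uniq_dvdz_range (S : seq int) (m : nat) (lo hi : int) :
  uniq S -> (0 < m)%N -> {in S &, forall x y, (m%:Z %| x - y)%Z} ->
  {in S, forall x, lo <= x <= hi} -> lo <= hi ->
  ((size S).-1 * m)%:Z <= hi - lo.
Proof.
move=> uS m_gt0 dvdS rangeS lo_hi.
pose h x := `|x - lo|%N.
have hE : {in S, forall x, (h x)%:Z = x - lo}.
  by move=> x /rangeS /andP[lo_x _]; rewrite gez0_abs // subr_ge0.
have h_inj : {in S &, injective h}.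
  by move=> x y xS yS /(congr1 Posz); rewrite !hE // => /addIr.
rewrite -[hi - lo]gez0_abs ?subr_ge0 // lez_nat -(size_map h).
apply: uniq_eqmod_size => //; first by rewrite map_inj_in_uniq.
  move=> _ _ /mapP[x xS ->] /mapP[y yS ->]; apply/eqP.
  rewrite -eqz_nat -!modz_nat eqz_mod_dvd !hE // opprB addrA subrK.
  exact: dvdS.
move=> _ /mapP[x xS ->]; rewrite -lez_nat hE // gez0_abs ?subr_ge0 //.
by rewrite lerB // (andP (rangeS x xS)).2.
Qed.

Definition rat_multiple {d : nat} (D b : 'rV[int]_d) : Prop :=
  exists q : rat,
    map_mx (fun z : int => z%:~R) D = q *: map_mx (fun z : int => z%:~R) b.

Lemma gcdv_ge0 {d : nat} (b : 'rV[int]_d) : 0 <= gcdv b.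
Proof. by rewrite /gcdv; elim/big_rec: _ => // i y _ _; rewrite /gcdz. Qed.

Lemma gcdv_Bezout {d : nat} (b : 'rV[int]_d) :
  exists u : 'I_d -> int, gcdv b = \sum_j u j * b 0 j.
Proof.
rewrite /gcdv; elim/big_rec: _ => [|i g _ [u ->]].
  by exists (fun=> 0); rewrite big1 // => j _; rewrite mul0r.
have [a [c <-]] := Bezoutz (b 0 i) (\sum_j u j * b 0 j).
exists (fun j => c * u j + (if j == i then a else 0)).
rewrite [RHS](eq_bigr (fun j => c * (u j * b 0 j) + (if j == i then a * b 0 j else 0))).
  by rewrite big_split /= -mulr_sumr -big_mkcond big_pred1_eq addrC.
by move=> j _; case: eqP => _; ring.
Qed.

Lemma rat_multiple_cross {d : nat} {D b : 'rV[int]_d} (i j : 'I_d) :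
  rat_multiple D b -> D 0 j * b 0 i = D 0 i * b 0 j.
Proof.
move=> [q Dq]; apply/eqP; rewrite -(eqr_int rat) !rmorphM /=.
have entry k : (D 0 k)%:~R = q * (b 0 k)%:~R :> rat.
  by have := congr1 (fun A : 'M[rat]_(1, d) => A 0 k) Dq; rewrite /= !mxE.
by rewrite !entry mulrAC.
Qed.

Lemma rat_multiple_dvdz {d : nat} {D b : 'rV[int]_d} (i : 'I_d) :
  rat_multiple D b -> (b 0%R i %| gcdv b * D 0%R i)%Z.
Proof.
move=> Db; have [u ->] := gcdv_Bezout b; rewrite mulr_suml.
under eq_bigr do rewrite -mulrA [b 0 _ * _]mulrC -(rat_multiple_cross _ _ Db) mulrA mulrC.
by rewrite -mulr_sumr dvdz_mulr.
Qed.

Lemma rat_multiple_eq0 {d : nat} {D b : 'rV[int]_d} (i : 'I_d) :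
  rat_multiple D b -> b 0 i != 0 -> D 0 i = 0 -> D = 0.
Proof.
move=> Db bi_neq0 Di0; apply/matrixP => k j; rewrite ord1 mxE; apply/eqP.
have /eqP := rat_multiple_cross i j Db.
by rewrite Di0 mul0r mulf_eq0 (negbTE bi_neq0) orbF.
Qed.

Section RatMultipleFamily.
Context {d : nat} (b : 'rV[int]_d) (i : 'I_d) {S : {fset 'rV[int]_d}} {lo hi : int}.
Hypothesis S_rat_multiple : {in S &, forall x y, rat_multiple (x - y) b}.
Hypothesis S_range : {in S, forall x : 'rV[int]_d, lo <= x 0 i <= hi}.
Hypothesis lo_le_hi : lo <= hi.

Lemma card_rat_multiple_familyz :
  0 < gcdv b -> b 0 i != 0 ->
  (#|`S|.-1 * `|b 0 i|)%:Z <= gcdv b * (hi - lo).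
Proof.
move=> g_gt0 bi_neq0; pose h (x : 'rV[int]_d) := gcdv b * x 0 i.
(* The values h x, x in S, are distinct and pairwise congruent modulo b_i. *)
have h_inj : {in S &, injective h}.
  move=> x y xS yS /(mulfI (lt0r_neq0 g_gt0)) eq_i; apply/eqP; rewrite -subr_eq0.
  apply/eqP; apply: (rat_multiple_eq0 i (S_rat_multiple _ _ xS yS) bi_neq0).
  by rewrite !mxE eq_i subrr.
have := @uniq_dvdz_range (map h S) `|b 0 i| (gcdv b * lo) (gcdv b * hi).
rewrite size_map -mulrBr; apply; rewrite ?absz_gt0 ?ler_pM2l //.
- by rewrite map_inj_in_uniq ?fset_uniq.
- move=> _ _ /mapP[x xS ->] /mapP[y yS ->]; rewrite -mulrBr.
  by have := rat_multiple_dvdz i (S_rat_multiple _ _ xS yS); rewrite !mxE.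
- by move=> _ /mapP[x xS ->]; rewrite /h !ler_pM2l //; apply: S_range.
Qed.

Lemma card_rat_multiple_family_le {R : realFieldType} {lam : R} {n : nat} :
  0 < lam -> lam <= `|b 0 i|%:~R / (gcdv b * n%:Z)%:~R ->
  #|`S|%:R <= (hi - lo)%:~R / (lam * n%:R) + 1.
Proof.
move=> lam_gt0 lam_le; set g := gcdv b in lam_le *.
(* Since x / 0 = 0, the bound on lam > 0 rules out g n = 0 and b_i = 0. *)
have ratio_gt0 : 0 < `|b 0 i|%:~R / (g * n%:Z)%:~R :> R by apply: lt_le_trans lam_le.
have gn_gt0 : 0 < (g * n%:Z)%:~R :> R.
  rewrite lt_def ler0z mulr_ge0 ?gcdv_ge0 // andbT.
  by apply: contraTneq ratio_gt0 => ->; rewrite invr0 mulr0 ltxx.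
have g_gt0 : 0 < g.
  rewrite lt_def gcdv_ge0 andbT; apply: contraTneq gn_gt0 => ->.
  by rewrite mul0r ltxx.
have n_gt0 : 0 < n%:R :> R by move: gn_gt0; rewrite rmorphM /= pmulr_rgt0 ?ltr0z.
have bi_neq0 : b 0 i != 0.
  by apply: contraTneq ratio_gt0 => ->; rewrite mul0r ltxx.
have spread := card_rat_multiple_familyz g_gt0 bi_neq0.
rewrite -(ler_int R) !rmorphM /= -pmulrn abszE in spread.
have lam_gn : lam * (g%:~R * n%:R) <= `|b 0 i|%:~R.
  by move: lam_le; rewrite ler_pdivlMr // rmorphM /= -pmulrn.
have card_pred : #|`S|%:R - 1 <= #|`S|.-1%:R :> R.
  by case: #|`S| => [|k] /=; [lra | rewrite -natr1 addrK].
have g_posR : 0 < g%:~R :> R by rewrite ltr0z.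
rewrite -lerBlDr ler_pdivlMr ?mulr_gt0 // -(ler_pM2l g_posR).
apply: le_trans spread; apply: le_trans (ler_wpM2l (ler0n _ _) lam_gn).
rewrite [lam * (_ * _)]mulrCA [leRHS]mulrCA ler_pM2l // ler_pM2r ?mulr_gt0 //.
Qed.

End RatMultipleFamily.

Lemma sum_card_sep_exchange (T T' : choiceType) (A : {fset T}) (B : {fset T'})
    (r : T -> T' -> bool) :
  (\sum_(x <- A) #|`[fset y in B | r x y]%fset|)%N =
  (\sum_(y <- B) #|`[fset x in A | r x y]%fset|)%N.
Proof.
have card_sep (I : choiceType) (C : {fset I}) (P : pred I) :
    #|`[fset z in C | P z]%fset| = (\sum_(z <- C) (P z : nat))%N.
  by rewrite card_fset_sum1 -big_fset_condE big_mkcond.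
rewrite (eq_bigr _ (fun x _ => card_sep _ B (r x))) exchange_big.
by apply: eq_bigr => y _; rewrite card_sep.
Qed.

Lemma in_fset_sep (K : choiceType) (A : {fset K}) (P : pred K) x :
  (x \in [fset y in A | P y]%fset) = (x \in A) && P x.
Proof. by rewrite !inE. Qed.

Section CongruenceClasses.
Context {n : nat}.
Implicit Types (Z : {fset 'rV[int]_n}) (c x y : 'rV[int]_n).

Lemma congr_mod_sym {c x y} : congr_mod c x y -> congr_mod c y x.
Proof. by case=> k xy; exists (- k); rewrite scaleNr -xy opprB. Qed.

Lemma congr_mod_trans {c x y z} : congr_mod c x y -> congr_mod c y z -> congr_mod c x z.
Proof. by case=> k xy [l yz]; exists (k + l); rewrite scalerDl -xy -yz addrA subrK. Qed.

Definition congr_class Z c y : {fset 'rV[int]_n} :=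
  [fset y' in Z | `[< congr_mod c y' y >]]%fset.

Lemma mem_U Z c r y : (y \in U Z c r) = (y \in Z) && (r <= #|`congr_class Z c y|)%N.
Proof. by rewrite !inE. Qed.

Lemma congr_class_eq Z {c x y} : congr_mod c x y -> congr_class Z c x = congr_class Z c y.
Proof.
move=> xy; apply/fsetP => z; rewrite !in_fset_sep; congr (_ && _).
apply/asboolP/asboolP => [zx | zy]; first exact: congr_mod_trans zx xy.
exact: congr_mod_trans zy (congr_mod_sym xy).
Qed.

Lemma congr_class_U Z c r y :
  y \in U Z c r -> congr_class (U Z c r) c y = congr_class Z c y.
Proof.
move=> yU; apply/fsetP => z; rewrite !in_fset_sep.
case: (boolP `[< _ >]) => [/asboolP zy|]; rewrite ?andbF ?andbT //.
by rewrite -/(congr_class Z c z) (congr_class_eq _ zy); move: yU; rewrite mem_U => /andP[_ ->]; rewrite andbT.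
Qed.

Lemma card_small_classes X Y c (s t : nat) : (Y `<=` X)%fset ->
  (s * #|`[fset y in (Y `&` U X c s)%fset | #|`congr_class Y c y| < t]%fset|
     <= t.-1 * #|`U X c s|)%N.
Proof.
move=> YX; set Us := U X c s; set T := [fset y in (Y `&` Us)%fset | _]%fset.
(* Double count the congruent pairs (y, x) in T * Us: each y has at least s
   partners, each x at most t - 1. *)
have /fsubsetP T_Us : (T `<=` Us)%fset := fsubset_trans (fset_sub _ _) (fsubsetIr _ _).
apply: (@leq_trans (\sum_(y <- T) #|`congr_class Us c y|)%N).
  rewrite card_fset_sum1 big_distrr /= big_seq [X in (_ <= X)%N]big_seq.
  apply: leq_sum => y /T_Us yUs; rewrite muln1 congr_class_U //.
  by move: yUs; rewrite mem_U => /andP[].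
rewrite (sum_card_sep_exchange _ _ T Us (fun y x => `[< congr_mod c x y >])).
rewrite card_fset_sum1 big_distrr /=; apply: leq_sum => x _; rewrite muln1.
have [-> | [y0 y0x]] := fset_0Vmem [fset y in T | `[< congr_mod c x y >]]%fset.
  by rewrite cardfs0.
move: y0x; rewrite !in_fset_sep => /andP[/andP[_ y0_small] /asboolP xy0].
rewrite -ltnS (ltn_predK y0_small) (leq_ltn_trans _ y0_small) //.
apply/fsubset_leq_card/fsubsetP => y; rewrite !in_fset_sep.
move=> /andP[/andP[/fsetIP[yY _] _] /asboolP xy]; rewrite yY; apply/asboolP.
exact: congr_mod_trans (congr_mod_sym xy) xy0.
Qed.

End CongruenceClasses.

Lemma sum_comp_le_fibre_bound (R : numDomainType) (I J : choiceType) (h : I -> J)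
    (A : {fset I}) (F : J -> R) (k : R) :
  (forall y, 0 <= F y) ->
  {in A, forall x, #|`[fset x' in A | h x' == h x]%fset|%:R <= k} ->
  \sum_(x <- A) F (h x) <= k * \sum_(y <- [fset h x | x in A]%fset) F y.
Proof.
move=> F_ge0 fibre_le; rewrite (partition_big_imfset _ h) mulr_sumr.
rewrite big_seq [leRHS]big_seq; apply: ler_sum => _ /imfsetP[x xA ->].
rewrite (eq_bigr (fun=> F (h x))) => [|x' /eqP -> //].
rewrite -[F (h x)]mul1r -mulr_suml mul1r ler_wpM2r // big_fset_condE.
by apply: le_trans (fibre_le x xA); rewrite card_fset_sum1 natr_sum.
Qed.

Lemma card_le_fibre_bound (R : numDomainType) (I J : choiceType) (h : I -> J)
    (A : {fset I}) (k : R) :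
  {in A, forall x, #|`[fset x' in A | h x' == h x]%fset|%:R <= k} ->
  #|`A|%:R <= k * #|`[fset h x | x in A]%fset|%:R.
Proof.
move=> fibre_le; have := @sum_comp_le_fibre_bound _ _ _ h A (fun=> 1) k (fun=> ler01) fibre_le.
by rewrite !card_fset_sum1 !natr_sum.
Qed.

Lemma affine_mapB {d e : nat} (M : 'M[int]_(e, d)) (v : 'rV[int]_e) x y :
  affine_map M v x - affine_map M v y = (x - y) *m M^T.
Proof. by rewrite /affine_map mulmxBl opprD addrACA subrr addr0. Qed.

Lemma affine_map_U {d e : nat} (M : 'M[int]_(e, d)) (v : 'rV[int]_e)
    (Y : {fset 'rV[int]_d}) (c y : 'rV[int]_d) (t : nat) :
  c *m M^T != 0 -> y \in Y -> (t <= #|`congr_class Y c y|)%N ->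
  affine_map M v y \in U (fimage (affine_map M v) Y) (c *m M^T) t.
Proof.
move=> cM_neq0 yY t_le; set f := affine_map M v.
rewrite mem_U in_imfset //=; apply: leq_trans t_le _.
have f_inj : {in congr_class Y c y &, injective f}.
  move=> y1 y2; rewrite !in_fset_sep => /andP[_ /asboolP y1y] /andP[_ /asboolP y2y] f12.
  have [k y12] := congr_mod_trans y1y (congr_mod_sym y2y).
  have /eqP := affine_mapB M v y1 y2; rewrite -/f f12 subrr y12 -scalemxAl eq_sym.
  rewrite scalemx_eq0 (negbTE cM_neq0) orbF => /eqP k0.
  by apply/eqP; rewrite -subr_eq0 y12 k0 scale0r.
apply: (@leq_trans #|`[fset f x | x in congr_class Y c y]%fset|).
  by rewrite [X in (_ <= X)%N]card_in_imfset.
apply/fsubset_leq_card/fsubsetP => _ /imfsetP[x /= + ->].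
rewrite !in_fset_sep => /andP[xY /asboolP [k xy]]; rewrite in_imfset //=.
by apply/asboolP; exists k; rewrite affine_mapB xy scalemxAl.
Qed.

Lemma two_div_le_four_div (R : realFieldType) (s lam : R) :
  2 <= s -> 0 < lam -> 2 / ((s - 1) * lam) <= 4 / (s * lam).
Proof.
move=> s_ge2 lam_gt0; rewrite ler_pdivrMr ?mulr_gt0 ?subr_gt0 //; last by lra.
have -> : 4 / (s * lam) * ((s - 1) * lam) = 4 * (s - 1) / s.
  by field; apply/andP; split; apply/eqP; lra.
rewrite ler_pdivlMr; lra.
Qed.

Lemma fibre_bounds_product_le (R : realFieldType) (s lam : R) :
  2 <= s -> 0 < lam -> lam < 1 / (s - 1) ->
  (lam^-1 + 1) * (2 / ((s - 1) * lam) + 1) <= 12 / (s * lam ^+ 2).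
Proof.
move=> s_ge2 lam_gt0; rewrite ltr_pdivlMr ?subr_gt0; last by lra.
move=> lam_a_lt1.
have -> : (lam^-1 + 1) * (2 / ((s - 1) * lam) + 1) =
    ((1 + lam) * (2 + (s - 1) * lam)) / ((s - 1) * lam ^+ 2).
  by field; apply/andP; split; apply/eqP; lra.
rewrite ler_pdivrMr ?mulr_gt0 ?exprn_gt0 ?subr_gt0 //; last by lra.
have -> : 12 / (s * lam ^+ 2) * ((s - 1) * lam ^+ 2) = 12 * (s - 1) / s.
  by field; apply/andP; split; apply/eqP; lra.
rewrite ler_pdivlMr; last by lra.
have : (1 + lam) * (2 + (s - 1) * lam) <= 2 * 3 by apply: ler_pM; nra.
nra.
Qed.

Section UnionBound.
Context {R : realType} {d e : nat} {N : 'I_d -> nat} {s sstar : nat}.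
Context {X B : {fset 'rV[int]_d}} {lam : R} {b : 'rV[int]_d}.
Context {M : 'M[int]_(e, d)} {v : 'rV[int]_e} {i : 'I_d}.
Hypothesis s_ge2 : (2 <= s)%N.
Hypothesis sstar_gt0 : (0 < sstar)%N.
Hypothesis lam_gt0 : 0 < lam.
Hypothesis lam_lt : lam < 1 / (s%:R - 1).
Hypothesis N_gt0 : (0 < N i)%N.
Hypothesis X_range : forall x, x \in X -> 1 <= x 0 i <= (N i)%:Z.
Hypothesis B_neq0 : forall b', b' \in B -> b' != 0.
Hypothesis B_range : forall b', b' \in B -> `|b' 0 i|%:~R <= (N i)%:R / (s%:R - 1) :> R.
Hypothesis lam_le_ratio : lam <= `|b 0 i|%:~R / (gcdv b * (N i)%:Z)%:~R.
Hypothesis fibre_rat_multiple :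
  forall x1 x2, affine_map M v x1 = affine_map M v x2 -> rat_multiple (x1 - x2) b.

Let f := affine_map M v.
Let Y := U X b s.
Let W c := U (fimage f Y) c sstar.

Lemma card_fibre_le (S : {fset 'rV[int]_d}) :
  (S `<=` X)%fset -> {in S &, forall x y, f x = f y} -> #|`S|%:R <= lam^-1 + 1.
Proof.
move=> /fsubsetP SX f_const.
have S_rm : {in S &, forall x y, rat_multiple (x - y) b}.
  by move=> x y xS yS; apply/fibre_rat_multiple/f_const.
have S_range : {in S, forall x : 'rV[int]_d, 1 <= x 0 i <= (N i)%:Z}.
  by move=> x /SX /X_range.
apply: le_trans (card_rat_multiple_family_le b i S_rm S_range _ lam_gt0 lam_le_ratio) _.
  by rewrite lez_nat.
rewrite lerD2r ler_pdivrMr ?mulr_gt0 ?ltr0n // mulKf ?gt_eqF //.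
by rewrite rmorphB /= -pmulrn lerBlDr lerDl.
Qed.

Lemma card_same_direction_le (S : {fset 'rV[int]_d}) :
  (S `<=` 0 |` B)%fset -> {in S &, forall x y, x *m M^T = y *m M^T} ->
  #|`S|%:R <= 2 / ((s%:R - 1) * lam) + 1.
Proof.
move=> /fsubsetP SB MS.
have S_rm : {in S &, forall x y, rat_multiple (x - y) b}.
  by move=> x y xS yS; apply: fibre_rat_multiple; rewrite /affine_map (MS x y).
have a_gt0 : 0 < s%:R - 1 :> R by rewrite subr_gt0 ltr1n.
pose L := Num.floor ((N i)%:R / (s%:R - 1) : R).
have L_ge0 : 0 <= L by rewrite floor_ge0 divr_ge0 // ltW.
have S_range : {in S, forall x : 'rV[int]_d, - L <= x 0 i <= L}.
  move=> x /SB; rewrite -ler_norml floor_ge_int !inE => /orP[/eqP -> | /B_range //].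
  by rewrite mxE normr0 divr_ge0 // ltW.
apply: le_trans (card_rat_multiple_family_le b i S_rm S_range _ lam_gt0 lam_le_ratio) _.
  lia.
have N_pos : 0 < (N i)%:R :> R by rewrite ltr0n.
pose A := (N i)%:R / (s%:R - 1) : R.
have -> : 2 / ((s%:R - 1) * lam) = (A + A) / (lam * (N i)%:R).
  by rewrite /A; field; apply/and3P; split; rewrite gt_eqF.
by rewrite lerD2r ler_pM2r ?invr_gt0 ?mulr_gt0 // opprK rmorphD lerD // floor_le.
Qed.

(* b' *m M^T is the direction of the images under f of the lines of direction
   b'; it vanishes exactly when b' is a rational multiple of b. *)
Let P := [fset b' in B | b' *m M^T == 0]%fset.
Let Q := [fset b' in B | ~~ (b' *m M^T == 0)]%fset.

Lemma card_parallel_le : #|`P|%:R <= 2 / ((s%:R - 1) * lam).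
Proof.
have P0 : 0 \notin P by rewrite in_fset_sep; apply/negP => /andP[/B_neq0]; rewrite eqxx.
have P_dir x : x \in (0 |` P)%fset -> x *m M^T = 0.
  by rewrite in_fset1U in_fset_sep => /orP[/eqP -> | /andP[_ /eqP]]; rewrite ?mul0mx.
have := @card_same_direction_le (0 |` P)%fset.
rewrite cardfsU1 P0 add1n -natr1 lerD2r; apply; first exact/fsetUS/fset_sub.
by move=> x y /P_dir -> /P_dir ->.
Qed.

Lemma sum_inter_parallel_le :
  \sum_(b' <- P) #|`(Y `&` U X b' s)%fset|%:R <= 4 / (s%:R * lam) * #|`Y|%:R.
Proof.
apply: le_trans (_ : _ <= \sum_(b' <- P) #|`Y|%:R) _.
  by apply: ler_sum => b' _; rewrite ler_nat fsubset_leq_card // fsubsetIl.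
have -> : \sum_(b' <- P) #|`Y|%:R = #|`P|%:R * #|`Y|%:R :> R.
  by rewrite [#|`P|]card_fset_sum1 natr_sum mulr_suml; under [RHS]eq_bigr do rewrite mul1r.
rewrite ler_wpM2r // (le_trans card_parallel_le) // two_div_le_four_div ?ler_nat //.
Qed.

Lemma card_inter_nonparallel_le b' : b' *m M^T != 0 ->
  #|`(Y `&` U X b' s)%fset|%:R <=
    (lam^-1 + 1) * #|`W (b' *m M^T)|%:R + (sstar%:R - 1) / s%:R * #|`U X b' s|%:R.
Proof.
move=> dir_neq0; have YX : (Y `<=` X)%fset := fset_sub _ _.
rewrite card_fset_sum1 (big_fsetID _ (fun y => #|`congr_class Y b' y| < sstar)%N) /=.
rewrite -!card_fset_sum1 natrD addrC; apply: lerD.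
- set T := [fset y in _ | ~~ _]%fset.
  have /fsubsetP TX : (T `<=` X)%fset.
    exact: fsubset_trans (fset_sub _ _) (fsubset_trans (fsubsetIl _ _) YX).
  apply: le_trans (@card_le_fibre_bound _ _ _ f T _ _) _.
    move=> x xT; apply: card_fibre_le.
      by apply/fsubsetP => x'; rewrite in_fset_sep => /andP[/TX].
    by move=> x' x''; rewrite !in_fset_sep => /andP[_ /eqP ->] /andP[_ /eqP ->].
  rewrite ler_pM2l ?addr_gt0 ?invr_gt0 // ler_nat fsubset_leq_card //.
  apply/fsubsetP => _ /imfsetP[y + ->]; rewrite in_fset_sep -leqNgt.
  by move=> /andP[/fsetIP[yY _]]; exact: affine_map_U.
- have := card_small_classes X Y b' s sstar YX; rewrite -(ler_nat R) !natrM.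
  rewrite -subn1 natrB // mulrC -ler_pdivlMr ?ltr0n; last by lia.
  by rewrite mulrAC.
Qed.

Let C := [fset b' *m M^T | b' in Q]%fset.

Lemma sum_W_nonparallel_le :
  \sum_(b' <- Q) #|`W (b' *m M^T)|%:R
    <= (2 / ((s%:R - 1) * lam) + 1) * \sum_(c <- C) #|`W c|%:R.
Proof.
apply: (@sum_comp_le_fibre_bound _ _ _ (fun b' => b' *m M^T) Q (fun c => #|`W c|%:R)) => // x _.
apply: card_same_direction_le => [|y z].
  apply/fsubsetP => y; rewrite !in_fset_sep => /andP[/andP[yB _] _].
  by rewrite in_fset1U yB orbT.
by rewrite !in_fset_sep => /andP[_ /eqP ->] /andP[_ /eqP ->].
Qed.

Lemma sum_card_inter_le :
  (\sum_(b' <- B) #|`(Y `&` U X b' s)%fset|)%:R <=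
    4 / (s%:R * lam) * #|`Y|%:R
    + (sstar%:R - 1) / s%:R * (\sum_(b' <- B) #|`U X b' s|)%:R
    + 12 / (s%:R * lam ^+ 2) * \sum_(c <- C) #|`W c|%:R.
Proof.
have nonparallel_le : \sum_(b' <- Q) #|`(Y `&` U X b' s)%fset|%:R <=
    (lam^-1 + 1) * \sum_(b' <- Q) #|`W (b' *m M^T)|%:R
    + (sstar%:R - 1) / s%:R * \sum_(b' <- Q) #|`U X b' s|%:R.
  rewrite !mulr_sumr -big_split /= big_seq [leRHS]big_seq; apply: ler_sum => b'.
  by rewrite in_fset_sep => /andP[_]; exact: card_inter_nonparallel_le.
have W_le : (lam^-1 + 1) * \sum_(b' <- Q) #|`W (b' *m M^T)|%:R <=
    12 / (s%:R * lam ^+ 2) * \sum_(c <- C) #|`W c|%:R.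
  apply: le_trans (ler_wpM2l _ sum_W_nonparallel_le) _.
    by rewrite addr_ge0 ?invr_ge0 ?ltW.
  rewrite mulrA ler_wpM2r ?sumr_ge0 // fibre_bounds_product_le ?ler_nat //.
have U_le : \sum_(b' <- Q) #|`U X b' s|%:R <= (\sum_(b' <- B) #|`U X b' s|)%:R :> R.
  by rewrite natr_sum [leRHS](big_fsetID _ (fun b' => b' *m M^T == 0)) /= lerDr sumr_ge0.
have c_ge0 : 0 <= (sstar%:R - 1) / s%:R :> R.
  by rewrite divr_ge0 // subr_ge0 ler1n.
rewrite [leLHS]natr_sum (big_fsetID _ (fun b' => b' *m M^T == 0)) /= -/P -/Q.
have := sum_inter_parallel_le; have := ler_wpM2l c_ge0 U_le; lra.
Qed.

End UnionBound.

Lemma fsum_le_esum (R : realType) (T : choiceType) (C : {fset T}) (D : set T) (F : T -> R) :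
  (forall c, c \in C -> D c) -> ((\sum_(c <- C) F c)%:E <= \esum_(c in D) (F c)%:E)%E.
Proof.
move=> CD; apply: esum_ge; exists [set` C]%classic.
  by split; [exact: finite_fset | move=> c /CD].
by rewrite -fsbig_seq ?fset_uniq // sumEFin.
Qed.

Theorem lemma4p9 (R : realType) (d : nat) (N : 'I_d -> nat) (s : nat)
  (X B : {fset 'rV[int]_d}) (lambda0 : R) (b : 'rV[int]_d)
  (M : 'M[int]_(d.-1, d)) (v : 'rV[int]_(d.-1)) (sstar : nat) :
  (2 <= d)%N ->
  (2 <= s)%N ->
  (forall i : 'I_d, (s < N i)%N) ->
  (forall x, x \in X -> forall i : 'I_d, 1 <= x 0 i <= (N i)%:Z) ->
  0 < lambda0 -> lambda0 < 1 / (s%:R - 1) ->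
  (forall b', b' \in B -> b' != 0) ->
  (forall b', b' \in B -> forall i : 'I_d,
      `|b' 0 i|%:~R <= (N i)%:R / (s%:R - 1) :> R) ->
  (forall b', b' \in B ->
      lambda0 <= \big[Num.max/0]_(i < d)
                   ((`|b' 0 i|)%:~R / ((gcdv b' * (N i)%:Z)%:~R) : R)) ->
  b \in B ->
  (forall x1 x2 : 'rV[int]_d,
      affine_map M v x1 = affine_map M v x2 <->
      exists k : rat, map_mx (fun z : int => z%:~R) (x1 - x2)
                      = k *: map_mx (fun z : int => z%:~R) b) ->
  (1 <= sstar <= s)%N ->
  (((\sum_(b' <- B) #|` (U X b s `&` U X b' s)%fset|)%:R : R)%:E <=
     ((4 / (s%:R * lambda0)) * (#|` U X b s|)%:R
      + ((sstar%:R - 1) / s%:R) * (\sum_(b' <- B) #|` U X b' s|)%:R)%:E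
     + (12 / (s%:R * lambda0 ^+ 2))%:E *
       \esum_(c in [set c : 'rV[int]_(d.-1) | c != 0%R])
          ((#|` U (fimage (affine_map M v) (U X b s)) c sstar|)%:R)%:E)%E.
Proof.
move=> _ s_ge2 N_gt_s X_range lam_gt0 lam_lt B_neq0 B_range B_ratio bB fibre.
move=> /andP[sstar_gt0 _].
have [i lam_le_ratio] : exists i, lambda0 <= `|b 0 i|%:~R / (gcdv b * (N i)%:Z)%:~R.
  have /bigmax_geP[|[i _ le_i]] := B_ratio b bB; last by exists i.
  by rewrite leNgt lam_gt0.
have N_gt0 : (0 < N i)%N := leq_ltn_trans (leq0n s) (N_gt_s i).
have := sum_card_inter_le s_ge2 sstar_gt0 lam_gt0 lam_lt N_gt0 (fun x xX => X_range x xX i)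
  B_neq0 (fun b' b'B => B_range b' b'B i) lam_le_ratio (fun x1 x2 => proj1 (fibre x1 x2)).
rewrite -lee_fin => /le_trans; apply; rewrite EFinD EFinM leeD2l // lee_wpmul2l //.
  by rewrite lee_fin divr_ge0 // mulr_ge0 // exprn_ge0 // ltW.
apply: fsum_le_esum => _ /imfsetP[b' /= + ->].
by rewrite in_fset_sep => /andP[].
Qed.
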